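(* Let $X$ be a finite topological space and $x\in X$. Then for every $y\in X$, $\Psi(y,x)\le |\{a\in X\mid \Psi(x,a)=0\}|$, i.e. the furtherness of any point $y$ from $x$ is at most the number of zeros in the row of $x$ of the furtherness matrix.
   Context: For a finite topological space $X$ and $x\in X$, $U_x$ denotes the minimal open set containing $x$. A nested sequence of open sets around $x$ is a finite sequence $U_0\subsetneq U_1\subsetneq\cdots\subsetneq U_m=X$ of open sets with $U_0=U_x$ such that for each $j$ there is no open set $V$ with $U_j\subsetneq V\subsetneq U_{j+1}$. The furtherness function $\Psi:X\times X\to\{0,1,\dots,|X|-1\}$ is defined by: $\Psi(x,y)$ is the smallest integer $k\ge 0$ such that there exists a nested sequence $(U_j)_{j\ge0}$ of open sets around $x$ with $y\in U_k$. The furtherness matrix of $X=\{a_1,\dots,a_n\}$ has $(i,j)$ entry $\Psi(a_i,a_j)$. *)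

From mathcomp Require Import all_boot.
From mathcomp Require Import boolp.

Set Implicit Arguments.
Unset Strict Implicit.
Unset Printing Implicit Defensive.

Section FiniteTop.
Variable T : finType.

Definition is_topology (op : {set {set T}}) : Prop :=
  [/\ set0 \in op, [set: T] \in op,
      (forall U V, U \in op -> V \in op -> U :|: V \in op) &
      (forall U V, U \in op -> V \in op -> U :&: V \in op)].

Variable op : {set {set T}}.

Definition minopen (x : T) : {set T} := \bigcap_(U in op | x \in U) U.

Definition cover_step (U V : {set T}) : bool :=
  (U \proper V) && [forall W, (W \in op) ==> ~~ ((U \proper W) && (W \proper V))].

Definition nested_seq (x : T) (s : seq {set T}) : Prop :=
  [/\ all (fun U => U \in op) s,
      head set0 s = minopen x,
      last set0 s = [set: T] &
      path cover_step (head set0 s) (behead s)].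

Definition Psi_pred (x y : T) (k : nat) : bool :=
  `[< exists s, nested_seq x s /\ k < size s /\ y \in nth set0 s k >].

Definition Psi (x y : T) : nat :=
  match pselect (exists k, Psi_pred x y k) with
  | left h => ex_minn h
  | right _ => 0
  end.

End FiniteTop.

(* Every open set V containing U_x is reached by some nested sequence around x,
   after at most #|V :\: U_x| covering steps: refine the inclusion U_x ⊆ V by
   minimal open sets, then refine V ⊆ X likewise.  Taking V = U_x shows that
   U_x lies in the zero set of the row of x; taking V = U_y ∪ U_x shows that
   Psi(y, x) <= #|U_x :\: U_y| <= #|U_x|. *)
From mathcomp Require Import all_boot.
From mathcomp Require Import boolp.

Set Implicit Arguments.
Unset Strict Implicit.
Unset Printing Implicit Defensive.

Section CoverChains.
Variables (T : finType) (op : {set {set T}}).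

Lemma exists_cover_step_sub (U V : {set T}) : V \in op -> U \proper V ->
  exists2 W, (W \in op) && (W \subset V) & cover_step op U W.
Proof.
move=> opV ltUV.
pose P W := [&& W \in op, U \proper W & W \subset V].
have PV : P V by rewrite /P opV ltUV subxx.
case: (arg_minnP (fun W : {set T} => #|W|) PV) => W /and3P[opW ltUW leWV] minW.
exists W; first by rewrite opW leWV.
rewrite /cover_step ltUW; apply/forallP => W'; apply/implyP => opW'.
apply/negP => /andP[ltUW' ltW'W].
have PW' : P W' by rewrite /P opW' ltUW' (subset_trans (proper_sub ltW'W) leWV).
by move: (minW W' PW'); rewrite leqNgt proper_card.
Qed.

Lemma exists_cover_chain (U V : {set T}) : U \in op -> V \in op -> U \subset V ->
  exists s, [/\ all (mem op) s, path (cover_step op) U s,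
                last U s = V & size s <= #|V :\: U|].
Proof.
move=> + opV; move: {2}#|V :\: U| (leqnn #|V :\: U|) => n.
elim: n U => [|n IHn] U leUVn opU leUV.
  exists [::]; split => //=; apply/eqP; rewrite eqEsubset leUV /=.
  by move: leUVn; rewrite leqn0 cards_eq0 setD_eq0.
have [leVU | ltUV] := boolP (V \subset U).
  by exists [::]; split => //=; apply/eqP; rewrite eqEsubset leUV.
have {}ltUV : U \proper V by rewrite properE leUV.
have [W /andP[opW leWV] stepUW] := exists_cover_step_sub opV ltUV.
have ltVW_VU : #|V :\: W| < #|V :\: U|.
  have ltUW := proj1 (andP stepUW).
  rewrite !cardsDS ?(subset_trans (proper_sub ltUW)) // ltn_sub2lE ?subset_leq_card //.
  exact: proper_card.
have [s [alls pathWs lastWs sizes]] := IHn W (leq_trans ltVW_VU leUVn) opW leWV.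
exists (W :: s); split => /=; first by rewrite opW.
- by rewrite stepUW.
- by [].
- exact: leq_ltn_trans ltVW_VU.
Qed.

End CoverChains.

Section Furtherness.
Variables (T : finType) (op : {set {set T}}).
Hypothesis top_op : is_topology op.

Lemma minopen_open x : minopen op x \in op.
Proof.
case: top_op => _ opT _ opI.
by apply: (big_ind (fun U => U \in op)) => // U /andP[].
Qed.

Lemma mem_minopen x : x \in minopen op x.
Proof. by apply/bigcapP => U /andP[]. Qed.

Lemma Psi_le_pred x y k : Psi_pred op x y k -> Psi op x y <= k.
Proof.
move=> Pk; rewrite /Psi; case: pselect => [ex|[]]; last by exists k.
by case: ex_minnP => m _; apply.
Qed.

Lemma Psi_le_card_setD x V y : V \in op -> minopen op x \subset V -> y \in V ->
  Psi op x y <= #|V :\: minopen op x|.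
Proof.
move=> opV leUxV yV; case: top_op => _ opT _ _.
have [s1 [all1 path1 last1 size1]] := exists_cover_chain (minopen_open x) opV leUxV.
have [s2 [all2 path2 last2 _]] := exists_cover_chain opV opT (subsetT V).
apply: leq_trans size1; apply: Psi_le_pred; apply/asboolP.
exists (minopen op x :: s1 ++ s2); split; last split.
- split => /=; first by rewrite minopen_open all_cat all1 all2.
  + by [].
  + by rewrite last_cat last1 last2.
  + by rewrite cat_path path1 last1 path2.
- by rewrite /= size_cat ltnS leq_addr.
- rewrite -cat_cons nth_cat ltnSn -[size s1]/(size (minopen op x :: s1)).-1.
  by rewrite nth_last /= last1.
Qed.

Lemma minopen_sub_Psi0 x : minopen op x \subset [set a | Psi op x a == 0].
Proof.
apply/subsetP => a aUx; rewrite inE -leqn0.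
by rewrite -(cards0 T) -(setDv (minopen op x)) Psi_le_card_setD ?minopen_open.
Qed.

End Furtherness.

Theorem mainTheorem16 (T : finType) (op : {set {set T}}) (Htop : is_topology op)
  (x : T) :
  forall y : T, Psi op y x <= #|[set a : T | Psi op x a == 0]|.
Proof.
move=> y; case: (Htop) => _ _ opU _.
set V := minopen op y :|: minopen op x.
have opV : V \in op by rewrite opU ?minopen_open.
have xV : x \in V by rewrite inE mem_minopen orbT.
apply: leq_trans (Psi_le_card_setD Htop opV (subsetUl _ _) xV) _.
apply: leq_trans (subset_leq_card (minopen_sub_Psi0 Htop x)).
by apply: subset_leq_card; rewrite subDset.
Qed.
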